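(* Let $v$ be a flow on a compact surface. If $\mathrm{Cl}(v)=\Omega(v)$, then $\mathrm{Cl}(v)$ is closed and there are no non-closed recurrent points, no non-periodic limit circuits, and no circuits with wandering holonomy.
   Context: Surface: 2-dimensional paracompact manifold, possibly with boundary, possibly non-orientable. $\mathrm{Cl}(v)$ is the union of singular points and periodic orbits; $\Omega(v)$ the set of non-wandering points; $x$ is recurrent if $x\in\omega(x)\cup\alpha(x)$. A separatrix is a non-singular orbit whose $\alpha$- or $\omega$-limit set is a singular point. A non-trivial circuit is the image of an oriented circle under a continuous orientation-preserving map which is either a periodic orbit, or a directed graph (not a singleton) that is a union of separatrices and finitely many singular points; it is periodic if it is a periodic orbit. A collar of $\gamma$ is an open annulus with $\gamma$ as a boundary component which is a component of $U-\gamma$ for some neighborhood $U$ of $\gamma$. $\gamma$ is semi-attracting (resp. semi-repelling) w.r.t. a small collar $\mathbb{A}$ if $\omega(x)=\gamma$, $O^+(x)\subset\mathbb{A}$ (resp. $\alpha(x)=\gamma$, $O^-(x)\subset\mathbb{A}$) for all $x\in\mathbb{A}$. A limit circuit is a non-trivial circuit that is semi-attracting or semi-repelling. A circuit with wandering holonomy is a non-trivial circuit $\gamma$ for which there are a non-singular $x\in\gamma$ and arbitrarily small open transverse arcs $I\ni x$ such that the first return map on $I$ is orientation-reversing, has nonempty domain, and its domain and image are disjoint. *)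

From HB Require Import structures.
From mathcomp Require Import all_boot all_order all_algebra.
From mathcomp Require Import all_classical all_reals all_analysis.
From mathcomp Require Import Rstruct Rstruct_topology.
Set Implicit Arguments. Unset Strict Implicit. Unset Printing Implicit Defensive.
Import Order.TTheory GRing.Theory Num.Theory.
Local Open Scope classical_set_scope.
Local Open Scope ring_scope.

Notation RR := Rdefinitions.R.

Definition homeo_on {X Y : topologicalType} (D : set X) (E : set Y)
    (f : X -> Y) : Prop :=
  f @` D = E /\
  {in D &, injective f} /\
  {within D, continuous f} /\
  exists g : Y -> X, (forall y, E y -> D (g y) /\ f (g y) = y) /\
                     {within E, continuous g}.

(* The closed upper half-plane, the model of a surface with boundary. *)
Definition half_plane : set (RR * RR) := [set p | 0 <= p.2].

Definition surface (T : topologicalType) : Prop :=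
  hausdorff_space T /\
  forall x : T, exists (U : set T) (W : set (RR * RR)) (phi : RR * RR -> T),
    open U /\ U x /\ open W /\ homeo_on (W `&` half_plane) U phi.

Definition compact_surface (T : topologicalType) : Prop :=
  surface T /\ compact [set: T].

Definition is_flow {T : topologicalType} (v : RR -> T -> T) : Prop :=
  continuous (fun p : RR * T => v p.1 p.2) /\
  (forall x, v 0 x = x) /\
  (forall s t x, v (s + t) x = v s (v t x)).

Section FlowNotions.
Context {T : topologicalType} (v : RR -> T -> T).

Definition orbit (x : T) : set T := [set v t x | t in [set: RR]].
Definition forward_orbit (x : T) : set T := [set v t x | t in [set t | 0 <= t]].
Definition backward_orbit (x : T) : set T := [set v t x | t in [set t | t <= 0]].

Definition singular (x : T) : Prop := forall t, v t x = x.

Definition periodic_point (x : T) : Prop :=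
  ~ singular x /\ exists P : RR, 0 < P /\ v P x = x.

Definition Clv : set T := [set x | singular x \/ periodic_point x].

Definition omega_limit (x : T) : set T :=
  [set y | forall N : RR, closure [set v t x | t in [set t | N <= t]] y].
Definition alpha_limit (x : T) : set T :=
  [set y | forall N : RR, closure [set v t x | t in [set t | t <= N]] y].

Definition nonwandering (x : T) : Prop :=
  forall U : set T, nbhs x U -> forall N : RR,
    exists t, N <= t /\ exists y, U y /\ U (v t y).
Definition Omegav : set T := [set x | nonwandering x].

Definition recurrent (x : T) : Prop := omega_limit x x \/ alpha_limit x x.

Definition separatrix (O : set T) : Prop :=
  exists x, O = orbit x /\ ~ singular x /\
    exists p, singular p /\ (omega_limit x = [set p] \/ alpha_limit x = [set p]).

Definition periodic_orbit (gamma : set T) : Prop :=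
  exists x, periodic_point x /\ gamma = orbit x.

(* A continuous map f from the oriented circle R/Z (as a 1-periodic map on R)
   is orientation-preserving (w.r.t. the flow direction) if near every
   parameter whose image is non-singular, f moves forward along the flow
   with a strictly increasing continuous time change. *)
Definition orientation_preserving_loop (f : RR -> T) : Prop :=
  forall s, ~ singular (f s) ->
    exists (d : RR) (h : RR -> RR), 0 < d /\ h 0 = 0 /\
      {within [set u | `|u| < d], continuous h} /\
      (forall u1 u2, `|u1| < d -> `|u2| < d -> u1 < u2 -> h u1 < h u2) /\
      (forall u, `|u| < d -> f (s + u) = v (h u) (f s)).

Definition nontrivial_circuit (gamma : set T) : Prop :=
  (exists f : RR -> T, (forall s, f (s + 1) = f s) /\ continuous f /\
     range f = gamma /\ orientation_preserving_loop f) /\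
  (periodic_orbit gamma \/
   ((~ exists p, gamma = [set p]) /\
    exists P : set T, finite_set P /\ P `<=` gamma /\ P `<=` singular /\
      forall y, gamma y -> P y \/ (separatrix (orbit y) /\ orbit y `<=` gamma))).

Definition periodic_circuit (gamma : set T) : Prop :=
  nontrivial_circuit gamma /\ periodic_orbit gamma.

Definition std_annulus : set (RR * RR) :=
  [set p | 1 < p.1 ^+ 2 + p.2 ^+ 2 < 4].

(* A collar of gamma: an open annulus A, which is a connected component of
   U - gamma for a neighbourhood U of gamma, having gamma as a boundary
   component (gamma is exactly the set of accumulation points of the inner
   end of A under some homeomorphism with the standard annulus). *)
Definition collar (gamma A : set T) : Prop :=
  open A /\
  (exists U : set T, (exists W : set T, open W /\ gamma `<=` W /\ W `<=` U) /\
     exists y, A = connected_component (U `\` gamma) y) /\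
  exists phi : RR * RR -> T, homeo_on std_annulus A phi /\
    gamma = [set z | forall e : RR, 0 < e ->
      closure (phi @` [set p | 1 < p.1 ^+ 2 + p.2 ^+ 2 < 1 + e]) z].

Definition semi_attracting (gamma : set T) : Prop :=
  exists A, collar gamma A /\
    forall x, A x -> omega_limit x = gamma /\ forward_orbit x `<=` A.
Definition semi_repelling (gamma : set T) : Prop :=
  exists A, collar gamma A /\
    forall x, A x -> alpha_limit x = gamma /\ backward_orbit x `<=` A.

Definition limit_circuit (gamma : set T) : Prop :=
  nontrivial_circuit gamma /\ (semi_attracting gamma \/ semi_repelling gamma).

Definition unit_open : set RR := [set s | 0 < s < 1].

(* I is an open transverse arc, parametrised by phi: phi maps ]0,1[
   homeomorphically onto I, and for some e > 0 the flow map
   (t, s) |-> v t (phi s) maps ]-e,e[ x ]0,1[ homeomorphically onto an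
   open subset of T (flow box). *)
Definition transverse_arc (I : set T) (phi : RR -> T) : Prop :=
  homeo_on unit_open I phi /\
  exists e : RR, 0 < e /\
    let B := [set p : RR * RR | `|p.1| < e /\ unit_open p.2] in
    open ((fun p : RR * RR => v p.1 (phi p.2)) @` B) /\
    homeo_on B ((fun p : RR * RR => v p.1 (phi p.2)) @` B)
             (fun p : RR * RR => v p.1 (phi p.2)).

(* First return map on I, as a relation: z = P(y). *)
Definition first_return (I : set T) (y z : T) : Prop :=
  I y /\ exists t, 0 < t /\ v t y = z /\ I z /\
    forall s, 0 < s -> s < t -> ~ I (v s y).

Definition return_domain (I : set T) : set T :=
  [set y | exists z, first_return I y z].
Definition return_image (I : set T) : set T :=
  [set z | exists y, first_return I y z].

Definition return_orientation_reversing (I : set T) (phi : RR -> T) : Prop :=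
  forall s, unit_open s -> return_domain I (phi s) ->
    exists d : RR, 0 < d /\
      forall s1 s2 r1 r2, unit_open s1 -> unit_open s2 -> unit_open r1 ->
        unit_open r2 -> `|s1 - s| < d -> `|s2 - s| < d -> s1 < s2 ->
        first_return I (phi s1) (phi r1) -> first_return I (phi s2) (phi r2) ->
        r2 < r1.

Definition wandering_holonomy_circuit (gamma : set T) : Prop :=
  nontrivial_circuit gamma /\
  exists x, gamma x /\ ~ singular x /\
    forall W : set T, nbhs x W ->
      exists (I : set T) (phi : RR -> T),
        I `<=` W /\ I x /\ transverse_arc I phi /\
        return_orientation_reversing I phi /\
        return_domain I !=set0 /\
        [disjoint return_domain I & return_image I].

End FlowNotions.

From HB Require Import structures.
From mathcomp Require Import all_boot all_order all_algebra.
From mathcomp Require Import all_classical all_reals all_analysis.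
From mathcomp Require Import Rstruct Rstruct_topology.
From mathcomp Require Import lra.
Set Implicit Arguments. Unset Strict Implicit. Unset Printing Implicit Defensive.
Import Order.TTheory GRing.Theory Num.Theory numFieldNormedType.Exports.
Local Open Scope classical_set_scope.
Local Open Scope ring_scope.

(* Limit sets consist of non-wandering points and the non-wandering set is
   closed, so under Cl(v) = Omega(v) the set Cl(v) is closed and contains all
   recurrent points.  A limit circuit lies in a limit set of a point of its
   collar, hence in Cl(v); a separatrix never meets Cl(v), so a non-periodic
   limit circuit would be a loop inside a finite set of singular points, i.e.
   a single point.  Finally let x be a non-singular point of a circuit with
   wandering holonomy.  If x is periodic, x itself returns to every transverse
   arc through it, forwards and backwards, so the domain and image of the
   return map meet.  Otherwise, inside a flow box around x a transverse arc
   cannot return to itself before some time a > 0, and by compactness of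
   [a, N] an arc close to x cannot return at times in [a, N] either; the
   returns of the small arcs given by the wandering holonomy therefore take
   arbitrarily long, so x lies in Omega(v) = Cl(v), a contradiction. *)

Section RealLemmas.
Variable R : realType.
Implicit Types (a b c d e x : R) (f : R -> R).

Lemma exists_natmul_gt x e : 0 < e -> exists n : nat, `|x| < n%:R * e.
Proof.
move=> e0; exists (Num.Def.archi_bound (`|x| / e)).
by rewrite -ltr_pdivrMr //; apply: archi_boundP; rewrite divr_ge0 // ltW.
Qed.

Lemma separated_set_has_min (H : set R) e :
  0 < e -> (forall h, H h -> 0 < h) ->
  (forall h1 h2, H h1 -> H h2 -> h1 < h2 -> e <= h2 - h1) ->
  H !=set0 -> exists2 m, H m & forall h, H h -> m <= h.
Proof.
move=> e0 Hpos Hsep [h0 Hh0].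
have [n lt_h0] := exists_natmul_gt h0 e0.
elim: n h0 Hh0 lt_h0 => [|n IH] h0 Hh0 lt_h0.
  by have := Hpos _ Hh0; have := ler_norm h0; rewrite mul0r in lt_h0; lra.
have [[h [Hh lt_h]]|nolt] := pselect (exists h, H h /\ h < h0); last first.
  by exists h0 => // h Hh; rewrite leNgt; apply/negP => lt_h; apply: nolt; exists h.
apply: (IH h Hh); have := Hsep _ _ Hh Hh0 lt_h.
move: lt_h0; rewrite -addn1 natrD mulrDl mul1r !gtr0_norm ?Hpos //; lra.
Qed.

Definition locally_injective_at f c :=
  exists2 d, 0 < d & {in [set r | `|r - c| < d] &, injective f}.

(* Near [c] a continuous locally injective map is strictly monotone. *)
Lemma locally_injective_not_extremum a b c f :
  a < c < b -> {within `[a, b], continuous f} -> locally_injective_at f c ->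
  exists r r', [/\ a <= r <= b, a <= r' <= b, f r < f c & f c < f r'].
Proof.
move=> /andP[ac cb] cf [d d0 inj].
pose del := Num.min d (Num.min (c - a) (b - c)) / 2.
have [m1 m2 m3] : [/\ Num.min d (Num.min (c - a) (b - c)) <= d,
    Num.min d (Num.min (c - a) (b - c)) <= c - a &
    Num.min d (Num.min (c - a) (b - c)) <= b - c].
  by rewrite !ge_min !lexx !orbT.
have del0 : 0 < del by rewrite divr_gt0 // !lt_min d0 !subr_gt0 ac cb.
have inI r : c - del <= r <= c + del -> r \in `[c - del, c + del].
  by rewrite in_itv.
have cdel : {within [set` `[c - del, c + del]], continuous f}.
  apply: continuous_subspaceW cf => r /=; rewrite !in_itv /= => /andP[h1 h2].
  by apply/andP; split; rewrite /del in h1 h2; lra.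
have idel : {in `[c - del, c + del] &, injective f}.
  move=> r r'; rewrite !in_itv /= => /andP[r1 r2] /andP[r'1 r'2].
  apply: inj; rewrite inE /= ltr_distlC; apply/andP; split;
    by rewrite /del in r1 r2 r'1 r'2 *; lra.
have in_ab r : c - del <= r <= c + del -> a <= r <= b.
  by move=> /andP[h1 h2]; apply/andP; split; rewrite /del in h1 h2; lra.
have lo : c - del <= c - del <= c + del by apply/andP; split; lra.
have mid : c - del <= c <= c + del by apply/andP; split; lra.
have hi : c - del <= c + del <= c + del by apply/andP; split; lra.
case: (itv_continuous_inj_mono cdel idel) => mono.
  exists (c - del), (c + del); split; try exact: in_ab.
    by apply: mono; rewrite ?inI //; lra.
  by apply: mono; rewrite ?inI //; lra.
exists (c + del), (c - del); split; try exact: in_ab.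
  by apply: mono; rewrite ?inI //; lra.
by apply: mono; rewrite ?inI //; lra.
Qed.

Lemma equal_ends_not_locally_injective a b f :
  a < b -> {within `[a, b], continuous f} -> f a = f b ->
  exists c, a < c < b /\ ~ locally_injective_at f c.
Proof.
move=> ab cf fab.
have [M /[!in_itv] /= /andP[aM Mb] fM] := EVT_max (ltW ab) cf.
have [m /[!in_itv] /= /andP[am mb] fm] := EVT_min (ltW ab) cf.
have fM' r : a <= r <= b -> f r <= f M by move=> hr; apply: fM; rewrite in_itv.
have fm' r : a <= r <= b -> f m <= f r by move=> hr; apply: fm; rewrite in_itv.
have [ltM|geM] := ltP (f a) (f M).
  have aM' : a < M.
    by rewrite lt_neqAle aM andbT; apply: contraTneq ltM => <-; rewrite ltxx.
  have Mb' : M < b.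
    by rewrite lt_neqAle Mb andbT; apply: contraTneq ltM => ->; rewrite fab ltxx.
  exists M; split; first by rewrite aM'.
  move=> /(locally_injective_not_extremum _ cf) [|_ [r' [_ hr' _ lt_r']]].
    by rewrite aM'.
  by have := fM' _ hr'; lra.
have [ltm|gem] := ltP (f m) (f a).
  have am' : a < m.
    by rewrite lt_neqAle am andbT; apply: contraTneq ltm => <-; rewrite ltxx.
  have mb' : m < b.
    by rewrite lt_neqAle mb andbT; apply: contraTneq ltm => ->; rewrite fab ltxx.
  exists m; split; first by rewrite am'.
  move=> /(locally_injective_not_extremum _ cf) [|r [_ [hr _ lt_r _]]].
    by rewrite am'.
  by have := fm' _ hr; lra.
have hc : a < (a + b) / 2 < b by apply/andP; split; lra.
exists ((a + b) / 2); split => // /(locally_injective_not_extremum hc cf).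
move=> [r [r' [hr hr' lt_r lt_r']]].
have hc' : a <= (a + b) / 2 <= b by apply/andP; split; lra.
by have := fM' _ hc'; have := fm' _ hr; lra.
Qed.

End RealLemmas.

Lemma continuous_finite_range (R : realType) (T : topologicalType) (f : R -> T)
    (P : set T) :
  accessible_space T -> continuous f -> finite_set P -> range f `<=` P ->
  range f = [set f 0].
Proof.
move=> /accessible_finite_set_closed closed_fin /continuous_closedP cf finP rfP.
set S := f @^-1` [set f 0].
have clS : closed S by apply: cf; apply: closed_fin; apply: finite_set1.
have opS : open S.
  have -> : S = ~` (f @^-1` (P `\ f 0)).
    apply/seteqP; split => [s /= -> [_]//|s /= nS]; apply: contrapT => nfs.
    by apply: nS; split => //; apply: rfP; exists s.
  by rewrite openC; apply: cf; apply: closed_fin; apply: finite_setD.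
have ST : S = setT.
  apply: (connected_intervalP [set: R]).2 => //; first by exists 0.
  - by exists S => //; rewrite setTI.
  - by exists S => //; rewrite setTI.
apply/seteqP; split => [_ [s _ <-]|_ ->]; last by exists 0.
by have : S s by rewrite ST.
Qed.

Lemma open_unit_open : open unit_open.
Proof.
have -> : unit_open = `]0, 1[%classic by apply/seteqP; split => s; rewrite /= in_itv.
exact: interval_open.
Qed.

Lemma within_open_continuous_at (X Y : topologicalType) (A : set X) (f : X -> Y) x :
  open A -> {within A, continuous f} -> A x -> {for x, continuous f}.
Proof. by move=> oA; rewrite continuous_open_subspace // => cf Ax; apply/cf/mem_set. Qed.

Lemma closed_Omegav (T : topologicalType) (v : RR -> T -> T) : closed (Omegav v).
Proof.
move=> x clx U; rewrite nbhsE => -[V [oV Vx] VU] N.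
have [z [Oz Vz]] := clx V (open_nbhs_nbhs (conj oV Vx)).
have [t [tN [y [Vy Vty]]]] := Oz V (open_nbhs_nbhs (conj oV Vz)) N.
by exists t; split => //; exists y; split; apply: VU.
Qed.

Definition flow_box (e : RR) : set (RR * RR) :=
  [set p | `|p.1| < e /\ unit_open p.2].

Section Flow.
Variables (T : topologicalType) (v : RR -> T -> T).
Hypothesis flow0 : forall x, v 0 x = x.
Hypothesis flowD : forall s t x, v (s + t) x = v s (v t x).
Hypothesis flow_cont : continuous (fun p : RR * T => v p.1 p.2).

Lemma omega_limit_nonwandering x y : omega_limit v x y -> nonwandering v y.
Proof.
move=> xy U HU N.
have [_ [[t1 t1ge0 <-] Ut1]] := xy 0 U HU.
have [_ [[t2 t2ge <-] Ut2]] := xy (t1 + N) U HU.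
exists (t2 - t1); split; first by move: t2ge => /=; lra.
by exists (v t1 x); split => //; rewrite -flowD subrK.
Qed.

Lemma alpha_limit_nonwandering x y : alpha_limit v x y -> nonwandering v y.
Proof.
move=> xy U HU N.
have [_ [[t1 t1ge0 <-] Ut1]] := xy 0 U HU.
have [_ [[t2 t2ge <-] Ut2]] := xy (t1 - N) U HU.
exists (t1 - t2); split; first by move: t2ge => /=; lra.
by exists (v t2 x); split => //; rewrite -flowD subrK.
Qed.

Lemma flow_natmul_period x P : v P x = x -> forall n : nat, v (n%:R * P) x = x.
Proof.
move=> Px; elim => [|n IH]; first by rewrite mul0r flow0.
by rewrite -addn1 natrD mulrDl mul1r flowD Px IH.
Qed.

Lemma periodic_omega_alpha x P :
  0 < P -> v P x = x -> omega_limit v x x /\ alpha_limit v x x.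
Proof.
move=> P0 Px; split => N; have [n Nn] := exists_natmul_gt N P0;
  have := ler_norm N; have := ler_norm (- N); rewrite normrN => ? ?;
  apply: subset_closure.
  by exists (n%:R * P); [rewrite /=; lra | exact: flow_natmul_period].
exists (- (n%:R * P)); first by rewrite /=; lra.
by rewrite -{1}(flow_natmul_period Px n) -flowD addNr flow0.
Qed.

Lemma separatrix_not_Clv (O : set T) : separatrix v O -> exists2 x, O x & ~ Clv v x.
Proof.
move=> [x [-> [nsx [p [sp lim]]]]]; exists x; first by exists 0 => //; rewrite flow0.
case=> [//|[_ [P [P0 Px]]]].
have [om al] := periodic_omega_alpha P0 Px.
by case: lim => lim; [move: om|move: al]; rewrite lim => /= xp; apply: nsx; rewrite xp.
Qed.

Lemma limit_circuit_sub_Omegav gamma : limit_circuit v gamma -> gamma `<=` Omegav v.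
Proof.
have annulus_pt : std_annulus (3 / 2, 0).
  by rewrite /std_annulus /= !expr2; apply/andP; split; lra.
move=> [_ [] [A [[_ [_ [phi [[imgA _] _]]]] lim]]];
  (have Aa : A (phi (3 / 2, 0)) by rewrite -imgA; exists (3 / 2, 0));
  have [<- _] := lim _ Aa.
  exact: omega_limit_nonwandering.
exact: alpha_limit_nonwandering.
Qed.

Lemma no_return_near x a b : hausdorff_space T ->
  (forall t, a <= t <= b -> v t x <> x) ->
  exists2 V, nbhs x V & forall y t, a <= t <= b -> V y -> ~ V (v t y).
Proof.
rewrite open_hausdorff => hT nper.
move/compact_near_coveringP: (@segment_compact _ a b) =>
  /(_ (T * T)%type (nbhs (x, x)) (fun p t => v t p.1 <> p.2) _) cover.
have : \forall p \near nbhs (x, x), `[a, b] `<=` (fun t => v t p.1 <> p.2).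
  apply: cover => t.
  rewrite /= in_itv /= => abt.
  have [[A B] /= [/[!inE] At Bx] [oA oB AB0]] := hT _ _ (introN eqP (nper t abt)).
  have [[W1 W2] /= [W1t W2x] sub] := @flow_cont (t, x) A (open_nbhs_nbhs (conj oA At)).
  exists (W1, W2 `*` B) => /=; first by split => //; exists (W2, B) => //;
    split => //; exact: open_nbhs_nbhs.
  move=> [t' [y w]] /= [W1t' [W2y Bw]] vw.
  have : A (v t' y) by apply: (sub (t', y)).
  by rewrite vw => Aw; have : set0 w by rewrite -AB0.
move=> [[V1 V2] /= [V1x V2x] sub].
exists (V1 `&` V2); first exact: filterI.
move=> y t abt [V1y V2y] [_ V2ty].
by have := sub (y, v t y) (conj V1y V2ty) t; rewrite /= in_itv /= abt; apply.
Qed.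

Definition flow_chart (phi : RR -> T) (p : RR * RR) : T := v p.1 (phi p.2).

Lemma transverse_arc_chart I phi : transverse_arc v I phi ->
  exists e (g : T -> RR * RR), 0 < e /\ phi @` unit_open = I /\
    {within unit_open, continuous phi} /\
    open (flow_chart phi @` flow_box e) /\
    {in flow_box e &, injective (flow_chart phi)} /\
    (forall p, flow_box e p -> g (flow_chart phi p) = p) /\
    {within flow_chart phi @` flow_box e, continuous g}.
Proof.
move=> [[img [_ [cphi _]]] [e [e0 [oO [_ [inj [_ [g [gK cg]]]]]]]]].
exists e, g; do 5!(split; first by []); split => // p Bp.
have [Bg Fg] := gK (flow_chart phi p) (ex_intro2 _ _ p Bp erefl).
by apply: inj; rewrite ?inE.
Qed.

Lemma transverse_arc_returns_separated I phi : transverse_arc v I phi ->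
  exists2 e, 0 < e & forall x s t, s < t -> I (v s x) -> I (v t x) -> e <= t - s.
Proof.
move=> /transverse_arc_chart [e [g [e0 [img [_ [_ [inj _]]]]]]].
exists e => // x s t st; rewrite -img => -[r Ur rs] [r' Ur' r't].
rewrite leNgt; apply/negP => lt_e.
have : (t - s, r) = (0, r').
  apply: inj; rewrite ?inE.
  - by split => //=; rewrite ger0_norm; lra.
  - by split => //=; rewrite normr0.
  - by rewrite /flow_chart /= flow0 rs r't -flowD subrK.
by case=> ts _; lra.
Qed.

Lemma first_return_exists I phi x t : transverse_arc v I phi ->
  I x -> 0 < t -> I (v t x) -> exists z, first_return v I x z.
Proof.
move=> arc Ix t0 Itx; have [e e0 sep] := transverse_arc_returns_separated arc.
have [m [m0 Im] mmin] : exists2 m, 0 < m /\ I (v m x) &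
    forall h, 0 < h /\ I (v h x) -> m <= h.
  apply: (@separated_set_has_min _ [set h | 0 < h /\ I (v h x)] e e0) =>
    [h []//|h1 h2 [_ I1] [_ I2] lt12|].
    exact: (sep x h1 h2 lt12 I1 I2).
  by exists t.
exists (v m x); split => //; exists m; split => //; split => //.
split => // s s0 sm Is.
by have := mmin s (conj s0 Is); lra.
Qed.

Lemma first_return_exists_backward I phi x t : transverse_arc v I phi ->
  I x -> 0 < t -> I (v (- t) x) -> exists y, first_return v I y x.
Proof.
move=> arc Ix t0 Itx; have [e e0 sep] := transverse_arc_returns_separated arc.
have [m [m0 Im] mmin] : exists2 m, 0 < m /\ I (v (- m) x) &
    forall h, 0 < h /\ I (v (- h) x) -> m <= h.
  apply: (@separated_set_has_min _ [set h | 0 < h /\ I (v (- h) x)] e e0) =>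
    [h []//|h1 h2 [_ I1] [_ I2] lt12|].
    by have := sep x (- h2) (- h1); rewrite ltrN2 => /(_ lt12 I2 I1); lra.
  by exists t.
exists (v (- m) x); split => //; exists m; split => //.
split; first by rewrite -flowD addrN flow0.
split => // s s0 sm Is.
have : 0 < m - s /\ I (v (- (m - s)) x).
  by split; [lra | rewrite opprB flowD].
by move/mmin; lra.
Qed.

Lemma periodic_return_domain_image I phi x P : transverse_arc v I phi ->
  I x -> 0 < P -> v P x = x -> return_domain v I x /\ return_image v I x.
Proof.
move=> arc Ix P0 Px; split.
  by apply: (first_return_exists arc Ix P0); rewrite Px.
by apply: (first_return_exists_backward arc Ix P0); rewrite -{1}Px -flowD addNr flow0.
Qed.

Section FlowBox.
Variables (phi0 : RR -> T) (e0 : RR) (g0 : T -> RR * RR).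
Local Notation box0 := (flow_chart phi0 @` flow_box e0).
Hypothesis open_box0 : open box0.
Hypothesis chart0K : forall p, flow_box e0 p -> g0 (flow_chart phi0 p) = p.
Hypothesis g0_cont : {within box0, continuous g0}.

Lemma box_transverse_coordinate_flow w t : box0 w -> `|(g0 w).1| < e0 / 2 ->
  0 < t < e0 / 2 -> (g0 (v t w)).2 = (g0 w).2.
Proof.
move=> [p Bp <-]; rewrite chart0K // => p1 /andP[t0 te].
have Bq : flow_box e0 (t + p.1, p.2).
  split; last by case: Bp.
  by rewrite /=; apply: le_lt_trans (ler_normD _ _) _; rewrite gtr0_norm //; lra.
by rewrite /flow_chart -flowD -[v _ (phi0 _)]/(flow_chart phi0 (t + p.1, p.2)) chart0K.
Qed.

Variables (I : set T) (phi : RR -> T).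
Hypothesis arc : transverse_arc v I phi.
Hypothesis I_box0 : I `<=` box0.

Lemma box_coordinates_continuous r : unit_open r -> {for r, continuous (g0 \o phi)}.
Proof.
have [_ [_ [_ [img [cphi _]]]]] := transverse_arc_chart arc.
move=> Ur; apply: continuous_comp.
  exact: within_open_continuous_at open_unit_open cphi Ur.
apply: within_open_continuous_at open_box0 g0_cont _.
by apply: I_box0; rewrite -img; exists r.
Qed.

(* Two nearby points of [I] with the same transverse coordinate lie on a short
   orbit segment, which the flow box of [I] forbids. *)
Lemma box_transverse_coordinate_locally_injective c :
  unit_open c -> locally_injective_at (fun r => (g0 (phi r)).2) c.
Proof.
move=> Uc; have [eI [_ [eI0 [img [_ [_ [injI _]]]]]]] := transverse_arc_chart arc.
pose tau r := (g0 (phi r)).1.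
have phi_chart r : unit_open r -> phi r = flow_chart phi0 (tau r, (g0 (phi r)).2).
  move=> Ur; have [p Bp pr] : box0 (phi r) by apply: I_box0; rewrite -img; exists r.
  by rewrite /tau -pr chart0K //; case: p {Bp pr}.
have /nbhs_ballP[d d0 near_c] : nbhs c (tau @^-1` ball (tau c) (eI / 2)).
  have ctau : {for c, continuous (fst \o (g0 \o phi))}.
    by apply: continuous_comp; [exact: box_coordinates_continuous | exact: cvg_fst].
  by apply: ctau; apply: nbhsx_ballx; lra.
move: Uc => /andP[c0 c1].
exists (Num.min d (Num.min c (1 - c))); first by rewrite !lt_min d0 c0 subr_gt0 c1.
move=> r r'; rewrite !inE /= !lt_min => /and3P[rd rc rc'] /and3P[r'd r'c r'c'] eqh.
have Ur : unit_open r.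
  by move: rc rc' => /ltr_normlP[? ?] /ltr_normlP[? ?]; apply/andP; split; lra.
have Ur' : unit_open r'.
  by move: r'c r'c' => /ltr_normlP[? ?] /ltr_normlP[? ?]; apply/andP; split; lra.
have tau_near r0 : `|r0 - c| < d -> `|tau r0 - tau c| < eI / 2.
  by move=> r0c; rewrite distrC; apply: near_c; rewrite /ball /= distrC.
have : (tau r' - tau r, r) = (0, r').
  apply: injI; rewrite ?inE.
  - split => //=; have := ler_distD (tau c) (tau r') (tau r).
    have := tau_near _ rd; have := tau_near _ r'd.
    by rewrite distrC [`|tau c - tau r|]distrC; lra.
  - by split => //=; rewrite normr0.
  by rewrite /flow_chart /= flow0 (phi_chart _ Ur) (phi_chart _ Ur') -flowD subrK eqh.
by case.
Qed.

Lemma box_transverse_coordinate_injective :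
  {in unit_open &, injective (fun r => (g0 (phi r)).2)}.
Proof.
move=> a b; rewrite !inE; wlog ab : a b / a < b => [wlog Ua Ub hab|].
  by case: (ltgtP a b) => // [ab|ba]; [exact: wlog | symmetry; exact: wlog].
move=> /andP[a0 _] /andP[_ b1] hab; exfalso.
have Uab r : a <= r <= b -> unit_open r by move=> /andP[? ?]; apply/andP; split; lra.
have cab : {within `[a, b], continuous (fun r => (g0 (phi r)).2)}.
  apply: continuous_in_subspaceT => r; rewrite inE /= in_itv /= => /Uab Ur.
  change {for r, continuous (snd \o (g0 \o phi))}.
  apply: continuous_comp; last exact: cvg_snd.
  by have := box_coordinates_continuous Ur.
have [c [/andP[ac cb] not_inj]] := equal_ends_not_locally_injective ab cab hab.
apply/not_inj/box_transverse_coordinate_locally_injective.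
by apply: Uab; apply/andP; split; apply: ltW.
Qed.

End FlowBox.

Lemma flow_box_no_short_return I0 phi0 x : transverse_arc v I0 phi0 -> I0 x ->
  exists V a, [/\ nbhs x V, 0 < a & forall I phi y t, transverse_arc v I phi ->
    I `<=` V -> I y -> 0 < t < a -> I (v t y) -> v t y = y].
Proof.
move=> arc0; have [e0 [g0 [e00 [img0 [_ [oO [_ [chart0K cg0]]]]]]]] :=
  transverse_arc_chart arc0.
set O := flow_chart phi0 @` flow_box e0.
rewrite -img0 => -[s0 Us0 <-].
have Fs0 : flow_chart phi0 (0, s0) = phi0 s0 by rewrite /flow_chart flow0.
have B0 : flow_box e0 (0, s0) by rewrite /flow_box /= normr0.
have Ox : O (phi0 s0) by exists (0, s0).
exists [set w | O w /\ `|(g0 w).1| < e0 / 2], (e0 / 2); split.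
- apply: filterI; first exact: open_nbhs_nbhs.
  have half0 : 0 < e0 / 2 by lra.
  have near0 : nbhs (g0 (phi0 s0)) [set p : RR * RR | `|p.1| < e0 / 2].
    rewrite -Fs0 chart0K //; exists (ball (0 : RR) (e0 / 2), setT).
      by split; [exact: nbhsx_ballx | exact: filterT].
    by move=> [p1 p2] [] /=; rewrite /ball /= sub0r normrN.
  exact: (within_open_continuous_at oO cg0 Ox near0).
- by lra.
move=> I phi y t arc IV Iy t0a Ity.
have [_ [_ [_ [img _]]]] := transverse_arc_chart arc.
have IO : I `<=` O by move=> w /IV[].
have [Oy y1] := IV y Iy.
move: Iy Ity (box_transverse_coordinate_flow chart0K Oy y1 t0a).
rewrite -img => -[sy Usy <-] [sz Usz <-] eqh; congr phi.
by apply: (box_transverse_coordinate_injective oO chart0K cg0 arc IO); rewrite ?inE.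
Qed.

Lemma returns_to_small_arcs_are_long I0 phi0 x N :
  hausdorff_space T -> transverse_arc v I0 phi0 -> I0 x ->
  (forall t, 0 < t -> v t x <> x) ->
  exists2 V, nbhs x V & forall I phi y t, transverse_arc v I phi ->
    I `<=` V -> I y -> 0 < t -> I (v t y) -> v t y <> y -> N < t.
Proof.
move=> hT arc0 I0x aper.
have [V [a [xV a0 short]]] := flow_box_no_short_return arc0 I0x.
have nper t : a <= t <= Num.max a N -> v t x <> x.
  by move=> /andP[at_ _]; apply: aper; exact: lt_le_trans a0 at_.
have [W xW noret] := no_return_near hT nper.
exists (V `&` W); first exact: filterI.
move=> I phi y t arc IVW Iy t0 Ity yper; rewrite ltNge; apply/negP => tN.
have [ta|at_] := ltP t a.
  by apply/yper/(short I phi) => //; [move=> w /IVW[] | apply/andP].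
apply: (noret y t); first by rewrite at_ le_max tN orbT.
  by case: (IVW y Iy).
by case: (IVW _ Ity).
Qed.

Lemma no_wandering_holonomy_circuit gamma : hausdorff_space T ->
  Clv v = Omegav v -> ~ wandering_holonomy_circuit v gamma.
Proof.
move=> hT ClO [_ [x [_ [nsx hol]]]].
have [I0 [phi0 [_ [I0x [arc0 [_ [_ dis0]]]]]]] := hol setT filterT.
have [[P [P0 Px]]|aper] := pselect (exists P, 0 < P /\ v P x = x).
  have [dom img] := periodic_return_domain_image arc0 I0x P0 Px.
  by move/disj_setPS: dis0 => /(_ x (conj dom img)).
have aper' t : 0 < t -> v t x <> x by move=> t0 tx; apply: aper; exists t.
suff : Omegav v x by rewrite -ClO => -[//|[_ [P [P0 Px]]]]; apply: aper; exists P.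
move=> U xU N.
have [V xV long] := returns_to_small_arcs_are_long N hT arc0 I0x aper'.
have [I [phi [IUV [_ [arc [_ [[y [z ret]] /disj_setPS dis]]]]]]] := hol _ (filterI xU xV).
have [Iy [t [t0 [tz [Iz _]]]]] := ret; subst z.
exists t; split; last by exists y; split; [case: (IUV y Iy) | case: (IUV _ Iz)].
apply/ltW/(long I phi y t arc) => // [w /IUV[] // | yper].
by rewrite yper in ret; apply: (dis y); split; exists y.
Qed.

Lemma limit_circuit_periodic gamma : accessible_space T ->
  Clv v = Omegav v -> limit_circuit v gamma -> periodic_orbit v gamma.
Proof.
move=> T1 ClO lim; have gamma_Cl : gamma `<=` Clv v.
  by rewrite ClO; exact: limit_circuit_sub_Omegav.
case: lim => -[[f [_ [cf [rf _]]]] [//|[nonpt [P [finP [_ [_ sep]]]]]]] _.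
exfalso; apply: nonpt; exists (f 0); rewrite -rf.
apply: (continuous_finite_range T1 cf finP); rewrite rf => y gy.
case: (sep y gy) => [//|[/separatrix_not_Clv [x' ox' nCl] sub]].
by exfalso; apply/nCl/gamma_Cl/sub.
Qed.

End Flow.

Theorem mainTheorem9 (T : topologicalType) (v : RR -> T -> T) :
  compact_surface T -> is_flow v ->
  Clv v = Omegav v ->
  closed (Clv v) /\
  (forall x : T, recurrent v x -> Clv v x) /\
  (forall gamma : set T, limit_circuit v gamma -> periodic_orbit v gamma) /\
  (forall gamma : set T, ~ wandering_holonomy_circuit v gamma).
Proof.
move=> [[hT _] _] [flow_cont [flow0 flowD]] ClO.
split; first by rewrite ClO; exact: closed_Omegav.
split; first by move=> x; rewrite ClO => -[xx|xx];
  [exact: (omega_limit_nonwandering flowD xx) |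
   exact: (alpha_limit_nonwandering flowD xx)].
split=> gamma.
  exact: (limit_circuit_periodic flow0 flowD (hausdorff_accessible hT) ClO).
exact: (no_wandering_holonomy_circuit flow0 flowD flow_cont hT ClO).
Qed.
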